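(* Let $n\ge1$ and $u,v\in V_n$. There exists a valid rectangular pattern of tiles in $\mathcal T'_n$ whose sequence of bottom labels is $\tau_n(v)$ and whose sequence of left labels is $\tau_n(u)$ if and only if $$(u,v)\in (V_n\setminus Z_n\times V_n\setminus Z_n)\cup(M_n\cap Z_n\times M_n\cap Z_n)\cup(M_n\setminus Z_n\times Z_n)\cup(Z_n\times M_n\setminus Z_n).$$
   Context: Write $\bar m=m+1$. $V_n=\{(v_0,v_1,v_2)\in\mathbb{Z}^3: 0\le v_0\le v_1\le 1,\ v_1\le v_2\le n+1\}$, elements written as words $v_0v_1v_2$. $Z_n=\{v_0v_1v_2\in V_n: v_0=0\}$, $M_n=\{v_0v_1v_2\in V_n:v_2\ge n\}$. A Wang tile is $t=(a,b,c,d)$ with $\mathrm{RIGHT}(t)=a$, $\mathrm{TOP}(t)=b$, $\mathrm{LEFT}(t)=c$, $\mathrm{BOTTOM}(t)=d$; $\hat t=(b,a,d,c)$, $\hat S=\{\hat t:t\in S\}$. Define (as (right, top, left, bottom)): $W_n=\{(11(i+1),11(j+1),11i,11j):1\le i,j\le n\}$; $B'_n=\{(00(i+1),111,00i,11n):0\le i\le n\}$; $G_n=\{(01(i+1),111,00i,11(n+1)):0\le i\le n\}$; $Y_n=\{(01(i+1),112,01i,11(n+1)):1\le i\le n\}$; $A_n=\{(00(i+1),112,01i,11n):1\le i\le n\}$; $J'_n=\{((0,k,l),(0,r,s),(0,s,r+n),(0,l,k+n)):(k,l),(r,s)\in\{(0,0),(0,1),(1,1)\}\}$. $\mathcal T'_n=W_n\cup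 B'_n\cup G_n\cup Y_n\cup A_n\cup\hat B'_n\cup\hat G_n\cup\hat Y_n\cup\hat A_n\cup J'_n$. A rectangular pattern is valid if adjacent tiles agree on their common edge; its bottom labels are the bottom labels of its bottom row read left to right, its left labels the left labels of its left column read bottom to top. $\tau_n:V_n\to V_n^*$ is $\tau_n(xyz)=(0,x-y+1,n)\cdot(11n)^{z-x-1}\cdot(11\bar n)^{n+1-z}$ if $x\ne z$, and $\tau_n(xyz)=(0,x-y+1,n+1)\cdot(11\bar n)^{n-z}$ if $x=z$ (concatenation of sequences; exponents denote repetition). *)

From mathcomp Require Import all_boot.
Set Implicit Arguments. Unset Strict Implicit. Unset Printing Implicit Defensive.

Definition label := (nat * nat * nat)%type.

Definition tile := (label * label * label * label)%type.
Definition RIGHT (t : tile) : label := let: (a, _, _, _) := t in a.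
Definition TOP (t : tile) : label := let: (_, b, _, _) := t in b.
Definition LEFT (t : tile) : label := let: (_, _, c, _) := t in c.
Definition BOTTOM (t : tile) : label := let: (_, _, _, d) := t in d.

Definition hat (t : tile) : tile := let: (a, b, c, d) := t in (b, a, d, c).
Definition hatset (S : tile -> Prop) (t : tile) : Prop := exists s, S s /\ t = hat s.

Definition inV (n : nat) (v : label) : bool :=
  let: (v0, v1, v2) := v in [&& v0 <= v1, v1 <= 1, v1 <= v2 & v2 <= n.+1].
Definition inZ (n : nat) (v : label) : bool :=
  let: (v0, _, _) := v in inV n v && (v0 == 0).
Definition inM (n : nat) (v : label) : bool :=
  let: (_, _, v2) := v in inV n v && (n <= v2).

Definition W_set (n : nat) (t : tile) : Prop :=
  exists i j, [/\ 1 <= i <= n, 1 <= j <= n &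
    t = ((1, 1, i.+1), (1, 1, j.+1), (1, 1, i), (1, 1, j))].
Definition B'_set (n : nat) (t : tile) : Prop :=
  exists i, i <= n /\ t = ((0, 0, i.+1), (1, 1, 1), (0, 0, i), (1, 1, n)).
Definition G_set (n : nat) (t : tile) : Prop :=
  exists i, i <= n /\ t = ((0, 1, i.+1), (1, 1, 1), (0, 0, i), (1, 1, n.+1)).
Definition Y_set (n : nat) (t : tile) : Prop :=
  exists i, 1 <= i <= n /\ t = ((0, 1, i.+1), (1, 1, 2), (0, 1, i), (1, 1, n.+1)).
Definition A_set (n : nat) (t : tile) : Prop :=
  exists i, 1 <= i <= n /\ t = ((0, 0, i.+1), (1, 1, 2), (0, 1, i), (1, 1, n)).
(* (k,l),(r,s) range over {(0,0),(0,1),(1,1)}, i.e. k <= l <= 1, r <= s <= 1 *)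
Definition J'_set (n : nat) (t : tile) : Prop :=
  exists k l r s, [/\ k <= l <= 1, r <= s <= 1 &
    t = ((0, k, l), (0, r, s), (0, s, r + n), (0, l, k + n))].

Definition T'_set (n : nat) (t : tile) : Prop :=
  W_set n t \/ B'_set n t \/ G_set n t \/ Y_set n t \/ A_set n t \/
  hatset (B'_set n) t \/ hatset (G_set n) t \/ hatset (Y_set n) t \/
  hatset (A_set n) t \/ J'_set n t.

(* A w x h rectangular pattern P : column i (0 = leftmost), row j (0 = bottom). *)
Definition valid_pattern (n w h : nat) (P : nat -> nat -> tile) : Prop :=
  forall i j, i < w -> j < h ->
    [/\ T'_set n (P i j),
        (i.+1 < w -> RIGHT (P i j) = LEFT (P i.+1 j)) &
        (j.+1 < h -> TOP (P i j) = BOTTOM (P i j.+1))].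

Definition bottom_labels (w : nat) (P : nat -> nat -> tile) : seq label :=
  [seq BOTTOM (P i 0) | i <- iota 0 w].
Definition left_labels (h : nat) (P : nat -> nat -> tile) : seq label :=
  [seq LEFT (P 0 j) | j <- iota 0 h].

(* tau_n; note x - y + 1 is written (x.+1 - y) to avoid truncation (x <= y). *)
Definition tau (n : nat) (v : label) : seq label :=
  let: (x, y, z) := v in
  if x != z then
    (0, x.+1 - y, n) :: nseq (z - x - 1) (1, 1, n) ++ nseq (n.+1 - z) (1, 1, n.+1)
  else
    (0, x.+1 - y, n.+1) :: nseq (n - z) (1, 1, n.+1).

(* Write u = (x, y, z).  The word tau_n(u) has length n+1-x: a first letter
   (0, x-y+1, _) followed by letters 11n and, from position z-x on, 11(n+1).
   Inside a pattern with such borders, right labels 11* propagate to the right,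
   and a tile with left and bottom labels 11* is a W tile, whose top index is one
   more than its bottom index and whose bottom index is at most n.

   Necessity: let u be in Z_n, so that the pattern has n+1 rows, and let
   v = (x', y', z') with z' < n.  The letter of tau_n(v) at position z'-x' ends
   in n+1 and is not the last one; every tile with that bottom passes a label 01*
   to its right, so its right neighbour in the bottom row (a Y or A tile) has
   top 112.  Climbing that column through W tiles, the bottom label at row j is
   11(j+1), which is impossible at row n.  Hatting the pattern exchanges u and v.

   Sufficiency: a J' tile in the corner, B', G and Y tiles along the bottom row
   (switching at position z'-x'), the hats of the corresponding tiles for u along
   the left column, and W tiles inside.  The W indices stay in 1..n exactly when
   u in Z_n forces v in M_n and v in Z_n forces u in M_n, which is the stated
   four-case condition. *)

From mathcomp Require Import all_boot zify.
Set Implicit Arguments. Unset Strict Implicit. Unset Printing Implicit Defensive.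

Definition label0 : label := (0, 0, 0).

Definition tau_gap (v : label) : nat := let: (x, _, z) := v in z - x.
Definition tau_lead (v : label) : nat := let: (x, y, _) := v in x.+1 - y.

Lemma size_tau n v : 0 < n -> inV n v -> size (tau n v) = n.+1 - v.1.1.
Proof.
case: v => [[x y] z] /= n_gt0 /and4P[? ? ? ?] /=.
by case: eqP => ? /=; rewrite ?size_cat !size_nseq; lia.
Qed.

Lemma nth_tau0 n v : inV n v ->
  nth label0 (tau n v) 0 = (0, tau_lead v, n + (tau_gap v == 0)).
Proof.
case: v => [[x y] z] /and4P[? ? ? ?] /=.
case: eqP => [-> | ?]; first by rewrite subnn addn1.
by rewrite (_ : z - x == 0 = false) ?addn0 //; lia.
Qed.

Lemma nth_tau_tail n v i : inV n v -> 0 < i < n.+1 - v.1.1 ->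
  nth label0 (tau n v) i = (1, 1, n + (tau_gap v <= i)).
Proof.
case: v => [[x y] z] /and4P[? ? ? ?] /=; case: i => // i /andP[_ lt_i].
case: eqP => [<- | ?] /=.
  by rewrite subnn nth_nseq ifT ?addn1 //; lia.
rewrite nth_cat size_nseq; case: ifP => lt_gap; rewrite nth_nseq.
  by rewrite lt_gap (_ : z - x <= i.+1 = false) ?addn0; last lia.
have -> : z - x <= i.+1 by lia.
by rewrite ifT ?addn1 //; lia.
Qed.

Lemma nth_tau_gap n v : inV n v -> v.2 <= n ->
  nth label0 (tau n v) (tau_gap v) = (nat_of_bool (v.1.1 != v.2), 1, n.+1).
Proof.
case: v => [[x y] z] /and4P[? ? ? ?] /= le_zn.
case: eqP => [? | ?] /=; first by subst; rewrite subnn; congr (_, _, _); lia.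
have -> : z - x = (z - x - 1).+1 by lia.
by rewrite /= nth_cat size_nseq subSS subn0 ltnn subnn nth_nseq ifT //; lia.
Qed.

Lemma hatK : involutive hat.
Proof. by case=> [[[a b] c] d]. Qed.

Lemma RIGHT_hat t : RIGHT (hat t) = TOP t. Proof. by case: t => [[[? ?] ?] ?]. Qed.
Lemma TOP_hat t : TOP (hat t) = RIGHT t. Proof. by case: t => [[[? ?] ?] ?]. Qed.
Lemma LEFT_hat t : LEFT (hat t) = BOTTOM t. Proof. by case: t => [[[? ?] ?] ?]. Qed.
Lemma BOTTOM_hat t : BOTTOM (hat t) = LEFT t. Proof. by case: t => [[[? ?] ?] ?]. Qed.

Lemma W_set_hat n t : W_set n t -> W_set n (hat t).
Proof. by case=> i [j [? ? ->]]; exists j, i. Qed.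

Lemma J'_set_hat n t : J'_set n t -> J'_set n (hat t).
Proof. by case=> k [l [r [s [? ? ->]]]]; exists r, s, k, l. Qed.

Lemma T'_hat n t : T'_set n t -> T'_set n (hat t).
Proof.
have hatset_hat S : hatset S t -> S (hat t) by case=> s [? ->]; rewrite hatK.
have hat_hatset S : S t -> hatset S (hat t) by exists t.
case=> [W | [B | [G | [Y | [A | [hB | [hG | [hY | [hA | J]]]]]]]]].
- by left; apply: W_set_hat.
- by do 5 right; left; apply: hat_hatset.
- by do 6 right; left; apply: hat_hatset.
- by do 7 right; left; apply: hat_hatset.
- by do 8 right; left; apply: hat_hatset.
- by do 1 right; left; apply: hatset_hat.
- by do 2 right; left; apply: hatset_hat.
- by do 3 right; left; apply: hatset_hat.
- by do 4 right; left; apply: hatset_hat.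
- by do 9 right; apply: J'_set_hat.
Qed.

Definition label11 (l : label) : bool := l.1 == (1, 1).

Ltac case_T' :=
  let T := fresh "T" in
  move=> T;
  rewrite /T'_set /W_set /B'_set /G_set /Y_set /A_set /hatset /J'_set in T;
  decompose [or and and3 ex] T; clear T; subst; rewrite /hat /=.

Ltac solve_labels :=
  rewrite /label11 /=; intros; try match goal with |- _ /\ _ => split end;
  try match goal with |- (_, _) = (_, _) => apply/eqP end;
  repeat match goal with
  | H : (_, _) = (_, _) |- _ => move/eqP: H => H
  | H : is_true ((_, _) == (_, _)) |- _ => rewrite !xpair_eqE in H
  end;
  rewrite ?xpair_eqE; lia.

Lemma T'_right11 n t : T'_set n t -> label11 (LEFT t) -> label11 (RIGHT t).
Proof. case_T'; solve_labels. Qed.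

Lemma T'_label11_step n t m : T'_set n t -> label11 (LEFT t) -> BOTTOM t = (1, 1, m) ->
  m <= n /\ TOP t = (1, 1, m.+1).
Proof. case_T'; solve_labels. Qed.

Lemma T'_right01 n t b : T'_set n t -> BOTTOM t = (b, 1, n.+1) -> (RIGHT t).1 = (0, 1).
Proof. case_T'; solve_labels. Qed.

Lemma T'_top112 n t : T'_set n t -> (LEFT t).1 = (0, 1) -> label11 (BOTTOM t) ->
  TOP t = (1, 1, 2).
Proof. case_T'; solve_labels. Qed.

Lemma size_bottom_labels w P : size (bottom_labels w P) = w.
Proof. by rewrite size_map size_iota. Qed.

Lemma size_left_labels h P : size (left_labels h P) = h.
Proof. by rewrite size_map size_iota. Qed.

Lemma nth_bottom_labels w P i : i < w -> nth label0 (bottom_labels w P) i = BOTTOM (P i 0).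
Proof. by move=> lt_iw; rewrite (nth_map 0) ?size_iota // nth_iota. Qed.

Lemma nth_left_labels h P j : j < h -> nth label0 (left_labels h P) j = LEFT (P 0 j).
Proof. by move=> lt_jh; rewrite (nth_map 0) ?size_iota // nth_iota. Qed.

Definition transpose_pattern (P : nat -> nat -> tile) i j : tile := hat (P j i).

Lemma valid_pattern_transpose n w h P :
  valid_pattern n w h P -> valid_pattern n h w (transpose_pattern P).
Proof.
move=> P_valid i j lt_ih lt_jw; have [T' right_left top_bottom] := P_valid j i lt_jw lt_ih.
split; first exact: T'_hat.
- by rewrite /transpose_pattern RIGHT_hat LEFT_hat.
- by rewrite /transpose_pattern TOP_hat BOTTOM_hat.
Qed.

Lemma bottom_labels_transpose h P : bottom_labels h (transpose_pattern P) = left_labels h P.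
Proof. by apply: eq_map => j; rewrite BOTTOM_hat. Qed.

Lemma left_labels_transpose w P : left_labels w (transpose_pattern P) = bottom_labels w P.
Proof. by apply: eq_map => i; rewrite LEFT_hat. Qed.

Section Ladder.

Variables (n w h : nat) (P : nat -> nat -> tile).
Hypothesis P_valid : valid_pattern n w h P.
Hypothesis left_column11 : forall j, 0 < j < h -> label11 (LEFT (P 0 j)).

Lemma valid_pattern_left11 i j : i < w -> 0 < j < h -> label11 (LEFT (P i j)).
Proof.
move=> + /[dup] j_range /andP[_ lt_jh]; elim: i => [_ | i IH lt_i1w].
  exact: left_column11.
have [T' right_left _] := P_valid (ltnW lt_i1w) lt_jh.
by rewrite -(right_left lt_i1w); apply: T'_right11 T' (IH (ltnW lt_i1w)).
Qed.

Variable i : nat.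
Hypotheses (i_range : 0 < i < w) (top_ladder : TOP (P i 0) = (1, 1, 2)).

Lemma ladder_bottom j : 0 < j < h -> BOTTOM (P i j) = (1, 1, j.+1).
Proof.
have lt_iw : i < w by case/andP: i_range.
elim: j => // j IH /andP[_ lt_j1h].
have [T' _ top_bottom] := P_valid lt_iw (ltnW lt_j1h).
rewrite -(top_bottom lt_j1h); case: j IH lt_j1h T' {top_bottom} => // j IH lt_j2h T'.
have j1_range : 0 < j.+1 < h by lia.
by have [_ ->] := T'_label11_step T' (valid_pattern_left11 lt_iw j1_range) (IH j1_range).
Qed.

Lemma ladder_height j : 0 < j < h -> j < n.
Proof.
move=> j_range; have [lt_iw lt_jh] : i < w /\ j < h by lia.
have [T' _ _] := P_valid lt_iw lt_jh.
by have [] := T'_label11_step T' (valid_pattern_left11 lt_iw j_range) (ladder_bottom j_range).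
Qed.

End Ladder.

Lemma tau_tiling_inZ_inM n w h P u v : 0 < n -> inV n u -> inV n v ->
  valid_pattern n w h P -> bottom_labels w P = tau n v -> left_labels h P = tau n u ->
  inZ n u -> inM n v.
Proof.
move=> n_gt0 Vu Vv P_valid bottomP leftP; rewrite /inZ /inM Vv.
case: u Vu leftP => [[x y] z] Vu leftP; rewrite Vu => /eqP x0.
case: v Vv bottomP => [[x' y'] z'] Vv bottomP; rewrite leqNgt; apply/negP => lt_z'n.
have h_eq : h = n.+1 by rewrite -(size_left_labels h P) leftP size_tau // x0.
have w_eq : w = n.+1 - x' by rewrite -(size_bottom_labels w P) bottomP size_tau.
move: (Vv) => /and4P[? ? ? ?].
have lt_gap1_w : (z' - x').+1 < w by lia.
have left_column11 j : 0 < j < h -> label11 (LEFT (P 0 j)).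
  by move=> j_range; rewrite -(@nth_left_labels h) ?leftP ?nth_tau_tail //=; lia.
have [T'_gap right_left _] := P_valid (z' - x') 0 (ltnW lt_gap1_w) ltac:(lia).
have [T'_next _ _] := P_valid (z' - x').+1 0 lt_gap1_w ltac:(lia).
have top_next : TOP (P (z' - x').+1 0) = (1, 1, 2).
  apply: T'_top112 T'_next _ _.
    rewrite -(right_left lt_gap1_w); apply: T'_right01 T'_gap _.
    by rewrite -(@nth_bottom_labels w) ?bottomP ?(nth_tau_gap Vv) //=; lia.
  by rewrite -(@nth_bottom_labels w) ?bottomP ?nth_tau_tail //=; lia.
have := ladder_height P_valid left_column11 _ top_next (j := n); lia.
Qed.

Definition row_tile n (v : label) i : tile :=
  ((0, nat_of_bool (tau_gap v < i.+1), tau_lead v + i), (1, 1, (tau_gap v < i).+1),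
   (0, nat_of_bool (tau_gap v < i), tau_lead v + i.-1), nth label0 (tau n v) i).

Definition corner_tile n (u v : label) : tile :=
  ((0, nat_of_bool (tau_gap v == 0), tau_lead v), (0, nat_of_bool (tau_gap u == 0), tau_lead u),
   nth label0 (tau n u) 0, nth label0 (tau n v) 0).

Definition inner_tile a b : tile := ((1, 1, a.+1), (1, 1, b.+1), (1, 1, a), (1, 1, b)).

Definition tau_pattern n (u v : label) i j : tile :=
  match i, j with
  | 0, 0 => corner_tile n u v
  | 0, _ => hat (row_tile n u j)
  | _, 0 => row_tile n v i
  | _, _ => inner_tile ((tau_gap u < j) + i) ((tau_gap v < i) + j)
  end.

Lemma bottom_labels_tau_pattern n u v :
  bottom_labels (size (tau n v)) (tau_pattern n u v) = tau n v.
Proof.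
apply: (@eq_from_nth _ label0); rewrite ?size_bottom_labels // => i lt_i.
by rewrite nth_bottom_labels //; case: i lt_i.
Qed.

Lemma left_labels_tau_pattern n u v :
  left_labels (size (tau n u)) (tau_pattern n u v) = tau n u.
Proof.
apply: (@eq_from_nth _ label0); rewrite ?size_left_labels // => j lt_j.
by rewrite nth_left_labels //; case: j lt_j => [|j] //= _; rewrite LEFT_hat.
Qed.

Lemma row_tile_T' n v i : 0 < n -> inV n v -> 0 < i < size (tau n v) ->
  T'_set n (row_tile n v i).
Proof.
move=> n_gt0 Vv; rewrite size_tau // => i_range; rewrite /row_tile nth_tau_tail //.
move: Vv i_range; case: v => [[x y] z] /and4P[? ? ? ?] /=.
case: i => // i i_range; rewrite addnS /=.
case: (ltngtP (z - x) i.+1) => gap_i.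
- by do 3 right; left; exists (x.+1 - y + i); split; solve_labels.
- by do 1 right; left; exists (x.+1 - y + i); split; solve_labels.
- by do 2 right; left; exists (x.+1 - y + i); split; solve_labels.
Qed.

Lemma tau_pattern_T' n u v i j : 0 < n -> inV n u -> inV n v ->
  (inZ n u -> inM n v) -> (inZ n v -> inM n u) ->
  i < size (tau n v) -> j < size (tau n u) -> T'_set n (tau_pattern n u v i j).
Proof.
move=> n_gt0 Vu Vv uv vu lt_i lt_j.
case: i j lt_i lt_j => [|i] [|j] lt_i lt_j.
- do 9 right; rewrite /= /corner_tile !nth_tau0 //.
  case: u v Vu Vv {uv vu lt_i lt_j} => [[x y] z] [[x' y'] z'] /and4P[? ? ? ?] /and4P[? ? ? ?] /=.
  by exists (z' - x' == 0), (x'.+1 - y'), (z - x == 0), (x.+1 - y); split; solve_labels.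
- by apply: T'_hat; apply: row_tile_T'.
- exact: row_tile_T'.
- move: lt_i lt_j uv vu; rewrite !size_tau // /inZ /inM Vu Vv.
  case: u v Vu Vv => [[x y] z] [[x' y'] z'] /and4P[? ? ? ?] /and4P[? ? ? ?] /= *.
  by left; exists ((z - x < j.+1) + i.+1), ((z' - x' < i.+1) + j.+1); split => //; lia.
Qed.

Lemma tau_pattern_valid n u v : 0 < n -> inV n u -> inV n v ->
  (inZ n u -> inM n v) -> (inZ n v -> inM n u) ->
  valid_pattern n (size (tau n v)) (size (tau n u)) (tau_pattern n u v).
Proof.
move=> n_gt0 Vu Vv uv vu i j lt_i lt_j; split; first exact: tau_pattern_T'.
- by case: i j {lt_i lt_j} => [|i] [|j] _ //=; rewrite ?RIGHT_hat; congr (_, _, _); lia.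
- by case: i j {lt_i lt_j} => [|i] [|j] _ //=; rewrite ?TOP_hat; congr (_, _, _); lia.
Qed.

Lemma tiling_conditionE n u v : inV n u -> inV n v ->
  [|| (~~ inZ n u && ~~ inZ n v),
      [&& inM n u, inZ n u, inM n v & inZ n v],
      [&& inM n u, ~~ inZ n u & inZ n v] |
      [&& inZ n u, inM n v & ~~ inZ n v]]
  = (inZ n u ==> inM n v) && (inZ n v ==> inM n u).
Proof.
rewrite /inZ /inM; case: u v => [[x y] z] [[x' y'] z'] -> -> /=.
by case: (x == 0); case: (x' == 0); case: (n <= z); case: (n <= z').
Qed.

Theorem proposition5p8 (n : nat) (u v : label) :
  1 <= n -> inV n u -> inV n v ->
  ((exists (w h : nat) (P : nat -> nat -> tile),
      [/\ valid_pattern n w h P, bottom_labels w P = tau n v & left_labels h P = tau n u])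
   <->
   [|| (~~ inZ n u && ~~ inZ n v),
       [&& inM n u, inZ n u, inM n v & inZ n v],
       [&& inM n u, ~~ inZ n u & inZ n v] |
       [&& inZ n u, inM n v & ~~ inZ n v]]).
Proof.
move=> n_gt0 Vu Vv; rewrite tiling_conditionE //; split.
- case=> w [h [P [P_valid bottomP leftP]]]; apply/andP; split; apply/implyP.
    exact: tau_tiling_inZ_inM P_valid bottomP leftP.
  apply: (tau_tiling_inZ_inM n_gt0 Vv Vu (valid_pattern_transpose P_valid)).
    by rewrite bottom_labels_transpose.
  by rewrite left_labels_transpose.
- case/andP=> /implyP uv /implyP vu.
  exists (size (tau n v)), (size (tau n u)), (tau_pattern n u v); split.
  + exact: tau_pattern_valid.
  + exact: bottom_labels_tau_pattern.
  + exact: left_labels_tau_pattern.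
Qed.
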